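(* A (Tychonoff) space $X$ is a finite $C$-space if and only if for any sequence $\{Q_n\}$ of finite-dimensional cubes and closed nowhere dense sets $A_n\subset Q_n$, every sequence of continuous maps $f_n\colon X\to Q_n$ is finitely removable from $A=\prod_{n=1}^\infty A_n$, i.e. for every sequence of positive reals $\{\epsilon_n\}$ there exist $m$ and continuous maps $g_n\colon X\to Q_n$, $n=1,\dots,m$, with $d_n(f_n(x),g_n(x))\le\epsilon_n$ for all $x\in X$, $n\le m$, and $(g_1(x),\dots,g_m(x))\notin\prod_{n=1}^m A_n$ for all $x\in X$.
   Context: A set is functionally open if it is a cozero set. $X$ is a finite $C$-space if for every sequence $\{\omega_n\}$ of finite covers of $X$ by functionally open sets there exist $k$ and finite families $\gamma_1,\dots,\gamma_k$ of pairwise disjoint functionally open sets such that each $\gamma_n$ refines $\omega_n$ and $\bigcup_{n=1}^k\gamma_n$ covers $X$. A finite-dimensional cube is $Q_n=[a_n,b_n]^{k(n)}\subset\mathbb R^{k(n)}$, with $d_n$ the metric induced by a norm on $\mathbb R^{k(n)}$. *)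

From mathcomp Require Import all_boot all_order all_algebra all_classical all_reals all_analysis.
Import Order.TTheory GRing.Theory Num.Theory.
Import numFieldNormedType.Exports.
Set Implicit Arguments. Unset Strict Implicit. Unset Printing Implicit Defensive.
Local Open Scope classical_set_scope.
Local Open Scope ring_scope.

Definition tychonoff_space (R : realType) (X : topologicalType) : Prop :=
  hausdorff_space X /\
  forall (x : X) (B : set X), closed B -> ~ B x ->
    exists f : X -> R, continuous f /\ f x = 0 /\ (forall y, B y -> f y = 1).

Definition functionally_open (R : realType) (X : topologicalType) (U : set X) : Prop :=
  exists f : X -> R, continuous f /\ U = [set x | f x != 0].

Definition fo_finite_cover (R : realType) (X : topologicalType) (w : seq (set X)) : Prop :=
  (forall U, U \in w -> functionally_open R U) /\
  (forall x : X, exists2 U, U \in w & U x).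

Definition fo_disjoint_family (R : realType) (X : topologicalType) (g : seq (set X)) : Prop :=
  (forall U, U \in g -> functionally_open R U) /\
  (forall i j, (i < size g)%N -> (j < size g)%N -> i <> j ->
     nth set0 g i `&` nth set0 g j = set0).

Definition refines (X : Type) (g w : seq (set X)) : Prop :=
  forall U, U \in g -> exists2 V, V \in w & U `<=` V.

(* finite C-space (sequences indexed from 0) *)
Definition finite_C_space (R : realType) (X : topologicalType) : Prop :=
  forall omega : nat -> seq (set X),
    (forall n, fo_finite_cover R (omega n)) ->
    exists (k : nat) (gamma : nat -> seq (set X)),
      (forall n, (n < k)%N ->
         fo_disjoint_family R (gamma n) /\ refines (gamma n) (omega n)) /\
      (forall x : X, exists n, (n < k)%N /\ exists2 U, U \in gamma n & U x).

Definition is_norm (R : realType) (k : nat) (N : 'rV[R]_k -> R) : Prop :=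
  [/\ forall v, 0 <= N v,
      forall v, N v = 0 -> v = 0,
      forall (c : R) v, N (c *: v) = `|c| * N v
    & forall v w, N (v + w) <= N v + N w].

Definition cube (R : realType) (k : nat) (a b : R) : set 'rV[R]_k :=
  [set v | forall i : 'I_k, a <= v ord0 i <= b].

Definition closed_nowhere_dense_in (T : topologicalType) (Q A : set T) : Prop :=
  [/\ A `<=` Q, closed A &
      forall U : set T, open U -> U `&` Q `<=` A -> U `&` Q = set0].
Arguments cube {R} k a b.

(* A finite cover of X by cozero sets {h_i > 0}, h_i >= 0, carries continuous
   weights lam_i = min(1, #I * h_i / sum_j h_j) with values in [0, 1], each
   vanishing outside its set, such that at every point some weight equals 1.

   (=>) Pull back along f_n a finite cover of the cube Q_n by balls of radius
   eps_n / 2 and apply the finite C-property to get families gamma_n of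
   disjoint cozero sets. On a member V of gamma_n the map f_n stays in one
   ball, and since A_n is nowhere dense that ball contains a point q_V of
   Q_n \ A_n. With weights lam_V for the cover formed by all the gamma_n, set
   g_n = f_n + sum_(V in gamma_n) lam_V (q_V - f_n): by disjointness g_n moves
   f_n along a single segment towards some q_V, and it equals q_V where
   lam_V = 1.

   (<=) Encode the weights of the cover omega_n as a map f_n : X -> [0,1]^K_n
   having a coordinate 1 at every point, and let A_n be the closed nowhere
   dense set of points of the cube without a strict maximal coordinate. If g_n
   is 1/4-close to f_n and strictly maximal at i, then the i-th weight is
   positive, so the sets {g_n has a strict maximum at i} form a disjoint
   cozero family refining omega_n. *)

From mathcomp Require Import all_boot all_order all_algebra all_classical all_reals all_analysis.
From mathcomp Require Import ring lra.
Import Order.TTheory GRing.Theory Num.Theory.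
Import numFieldNormedType.Exports.
Local Open Scope classical_set_scope.
Local Open Scope ring_scope.

Lemma dependent_choice (I : Type) (T : I -> Type) (P : forall i, T i -> Prop) :
  (forall i, exists y, P i y) -> exists f : forall i, T i, forall i, P i (f i).
Proof. by move=> h; exists (fun i => projT1 (cid (h i))) => i; exact: projT2 (cid (h i)). Qed.

Lemma continuous_sum {R : realType} {T : topologicalType} {V : normedModType R}
    (I : Type) (r : seq I) (P : pred I) (F : I -> T -> V) :
  (forall i, continuous (F i)) -> continuous (fun x => \sum_(i <- r | P i) F i x).
Proof. by move=> hF; apply: continuous_big => [|i _]; [exact: add_continuous | exact: hF]. Qed.

Section real_matrices.
Context {R : realType}.

Lemma mx_coord_le_norm {m n} (M : 'M[R]_(m, n)) i j : `|M i j| <= `|M|.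
Proof.
rewrite [leRHS]/Num.norm /= mx_normrE; apply/bigmax_geP; right.
by exists (i, j).
Qed.

Lemma continuous_row (T : topologicalType) k (h : 'I_k -> T -> R) :
  (forall i, continuous (h i)) -> continuous (fun x => \row_i h i x : 'rV[R]_k).
Proof.
move=> hc; have -> : (fun x => \row_i h i x : 'rV[R]_k) =
    (fun x => \sum_(i < k) h i x *: (delta_mx 0 i : 'rV[R]_k)).
  by apply: funext => x; rewrite [LHS]matrix_sum_delta big_ord1; under eq_bigr do rewrite mxE.
apply: continuous_sum => i x; apply: continuousZ; [exact: hc | exact: cvg_cst].
Qed.

End real_matrices.

Section is_norm_theory.
Context {R : realType} {k : nat} {N : 'rV[R]_k -> R} (hN : is_norm N).

Lemma is_norm_ge0 v : 0 <= N v. Proof. by case: hN. Qed.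

Lemma is_normZ c v : N (c *: v) = `|c| * N v. Proof. by case: hN. Qed.

Lemma is_normD v w : N (v + w) <= N v + N w. Proof. by case: hN. Qed.

Lemma is_norm0 : N 0 = 0.
Proof. by rewrite -(scale0r (0 : 'rV[R]_k)) is_normZ normr0 mul0r. Qed.

Lemma is_normN v : N (- v) = N v.
Proof. by rewrite -scaleN1r is_normZ normrN normr1 mul1r. Qed.

Lemma is_norm_distC v w : N (v - w) = N (w - v).
Proof. by rewrite -is_normN opprB. Qed.

Lemma is_norm_le_mx_norm v : N v <= (\sum_i N (delta_mx 0 i)) * `|v|.
Proof.
rewrite {1}[v]matrix_sum_delta big_ord1 mulr_suml.
elim/big_rec2: _ => [|i y s _ hys]; first by rewrite is_norm0.
apply: le_trans (is_normD _ _) _; rewrite addrC [leRHS]addrC lerD // is_normZ mulrC.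
by rewrite ler_wpM2l ?is_norm_ge0 ?mx_coord_le_norm.
Qed.

Lemma is_norm_ler_dist_dist v w : `|N v - N w| <= N (v - w).
Proof.
have hv : N v <= N (v - w) + N w by rewrite -{1}(subrK w v) is_normD.
have hw : N w <= N (v - w) + N v by rewrite is_norm_distC -{1}(subrK v w) is_normD.
by rewrite ler_norml; apply/andP; split; lra.
Qed.

Lemma is_norm_continuous : continuous N.
Proof.
move=> v; apply/(@cvgrPdist_lt _ _ _ _ (nbhs_filter v)) => e e0.
pose C := \sum_i N (delta_mx 0 i : 'rV[R]_k) + 1.
have C0 : 0 < C by rewrite ltr_wpDl // sumr_ge0 // => i _; exact: is_norm_ge0.
apply/(nbhs_normP v (fun w => `|N v - N w| < e)).
exists (e / C) => [|w /= hw]; first exact: divr_gt0.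
apply: le_lt_trans (is_norm_ler_dist_dist _ _) _.
apply: le_lt_trans (is_norm_le_mx_norm _) _.
rewrite ltr_pdivlMr // mulrC in hw.
by apply: le_lt_trans hw; rewrite ler_wpM2r // lerDl.
Qed.

Lemma open_norm_ball c r : open [set v | N (v - c) < r].
Proof.
have -> : [set v | N (v - c) < r] = (fun v => N (v - c)) @^-1` [set t | t < r] by [].
apply: open_comp; last exact: open_lt.
move=> v _; have subc : {for v, continuous (fun w : 'rV[R]_k => w - c)}.
  by apply: continuousB; [| exact: cst_continuous].
exact: continuous_comp subc (is_norm_continuous _).
Qed.

End is_norm_theory.

Section cube_theory.
Context {R : realType} (k : nat) (a b : R).

Lemma cube_compact : compact (cube k a b).
Proof.
have -> : cube k a b = [set v : 'rV[R]_k | forall i, `[a, b]%classic (v 0 i)].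
  by apply/seteqP; split => v /= hv i; have := hv i; rewrite /= in_itv.
by apply: (@rV_compact R k (fun=> `[a, b]%classic)) => i; exact: segment_compact.
Qed.

Lemma cube_closed : closed (cube k a b).
Proof. exact: compact_closed (@norm_hausdorff _ _) cube_compact. Qed.

End cube_theory.

Lemma cube_convex {R : realType} {k : nat} {a b : R} {v w : 'rV[R]_k} {l : R} :
  cube k a b v -> cube k a b w -> 0 <= l <= 1 -> cube k a b (v + l *: (w - v)).
Proof.
move=> hv hw /andP[l0 l1] i; rewrite !mxE.
have /andP[av vb] := hv i; have /andP[aw wb] := hw i.
by apply/andP; split; nra.
Qed.

Lemma closed_nowhere_dense_avoid {T : topologicalType} {Q A U : set T} :
  closed_nowhere_dense_in Q A -> open U -> (U `&` Q) !=set0 ->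
  exists q, [/\ U q, Q q & ~ A q].
Proof.
move=> [_ _ hnd] oU /set0P UQ0; apply: contrapT => hno; move/eqP: UQ0; apply.
by apply: hnd oU _ => q [Uq Qq]; apply: contrapT => Aq; apply: hno; exists q.
Qed.

Lemma exists_ge_mean {R : realType} (I : finType) (F : I -> R) : (0 < #|I|)%N ->
  exists i, \sum_j F j <= #|I|%:R * F i.
Proof.
move=> /card_gt0P[i0 _]; apply: contrapT => hno.
have hlt i : #|I|%:R * F i < \sum_j F j.
  by rewrite ltNge; apply/negP => hi; apply: hno; exists i.
have hI : has predT (index_enum I) by apply/hasP; exists i0; rewrite ?mem_index_enum.
have := ltr_sum hI (fun i _ => hlt i).
by rewrite -mulr_sumr sumr_const mulr_natl ltxx.
Qed.

Section functionally_open_theory.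
Context {R : realType} {X : topologicalType}.

Lemma functionally_open_gt0 (h : X -> R) : continuous h ->
  functionally_open R [set x | 0 < h x].
Proof.
move=> hc; exists (fun x => Num.max 0 (h x)); split.
  by move=> x; apply: continuous_max; [exact: cvg_cst | exact: hc].
apply/seteqP; split => x /=; first by move=> hx; rewrite max_r ?ltW // gt_eqF.
by case: (ltP 0 (h x)) => // _; rewrite eqxx.
Qed.

Lemma functionally_open_set0 : functionally_open R (@set0 X).
Proof.
exists (fun=> 0); split; first exact: cst_continuous.
by apply/seteqP; split => x //=; rewrite eqxx.
Qed.

Lemma functionally_openP {U : set X} : functionally_open R U ->
  exists h : X -> R, [/\ continuous h, forall x, 0 <= h x & U = [set x | 0 < h x]].
Proof.
move=> [h [hc ->]]; exists (fun x => `|h x|); split => //.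
  by move=> x; apply: (@continuous_comp _ _ _ h Num.norm x); [exact: hc | exact: norm_continuous].
by apply/seteqP; split => x /=; rewrite normr_gt0.
Qed.

Lemma functionally_open_cover_saturated {I : finType} (U : I -> set X) :
    (forall i, functionally_open R (U i)) -> (forall x, exists i, U i x) ->
  exists lam : I -> X -> R,
    [/\ forall i, continuous (lam i),
        forall i x, 0 <= lam i x <= 1,
        forall i x, lam i x != 0 -> U i x
      & forall x, exists i, lam i x = 1].
Proof.
move=> hU hcov; have /choice[h h_spec] := fun i => functionally_openP (hU i).
have [hc h0 Uh] : [/\ forall i, continuous (h i), forall i x, 0 <= h i x
                    & forall i, U i = [set x | 0 < h i x]].
  by split => i; case: (h_spec i).
pose S x := \sum_i h i x.
have S_pos x : 0 < S x.
  have [i] := hcov x; rewrite Uh /= => hix.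
  by apply: lt_le_trans hix _; rewrite /S (bigD1 i) //= lerDl sumr_ge0.
(* Some h_i x is at least the mean S x / #|I|, where the weight saturates. *)
exists (fun i x => Num.min 1 (#|I|%:R * h i x / S x)); split.
- move=> i x; apply: (@continuous_min _ _ (fun=> 1) (fun x => #|I|%:R * h i x / S x));
    first exact: cvg_cst.
  apply: continuousM; first by apply: continuousM; [exact: cvg_cst | exact: hc].
  by apply: continuousV; [rewrite gt_eqF | apply: continuous_sum].
- move=> i x; rewrite ge_min lexx le_min ler01 /=.
  by rewrite andbT divr_ge0 ?mulr_ge0 ?h0 // ltW.
- move=> i x; rewrite Uh /= lt0r h0 andbT.
  by apply: contraNN => /eqP ->; rewrite mulr0 mul0r min_r.
- move=> x; have [i _] := hcov x.
  have I0 : (0 < #|I|)%N by apply/card_gt0P; exists i.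
  have [j hj] := @exists_ge_mean R I (h^~ x) I0.
  by exists j; rewrite min_l // ler_pdivlMr // mul1r.
Qed.

Lemma fo_disjoint_family_nth_inj (g : seq (set X)) i j x : fo_disjoint_family R g ->
  nth set0 g i x -> nth set0 g j x -> i = j.
Proof.
move=> [_ disj] gi gj; have inb l : nth set0 g l x -> (l < size g)%N.
  by rewrite ltnNge; apply: contraPN => /(nth_default set0) ->.
apply: contrapT => ij; have : (nth set0 g i `&` nth set0 g j) x by split.
by rewrite disj // inb.
Qed.

End functionally_open_theory.

Section perturbation.
Context {R : realType} {X : topologicalType} {k : nat} {a b : R} {N : 'rV[R]_k -> R}.
Variables (f : X -> 'rV[R]_k) (A : set 'rV[R]_k) (eps : R).
Hypotheses (hN : is_norm N) (f_cont : continuous f) (f_cube : forall x, cube k a b (f x)).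
Hypotheses (hA : closed_nowhere_dense_in (cube k a b) A) (eps_gt0 : 0 < eps).

Lemma ball_preimage_cover r : 0 < r ->
  exists w : seq (set X), fo_finite_cover R w /\
    forall U, U \in w -> exists c, U `<=` f @^-1` [set v | N (v - c) < r].
Proof.
move=> r0; pose B c := [set v | N (v - c) < r].
have := cube_compact k a b; rewrite compact_cover => /(_ _ setT B) [].
- by move=> c _; exact: open_norm_ball.
- by move=> v _; exists v => //; rewrite /B /= subrr is_norm0.
move=> D _ hD; exists [seq f @^-1` B c | c <- finmap.enum_fset D]; split; last first.
  by move=> U /mapP[c _ ->]; exists c.
split => [U /mapP[c _ ->]|x].
  have -> : f @^-1` B c = [set x | 0 < r - N (f x - c)].
    by apply/seteqP; split => x /=; rewrite subr_gt0.
  apply: functionally_open_gt0 => x; apply: continuousB; first exact: cvg_cst.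
  have subc : {for x, continuous (fun x => f x - c)}.
    by apply: continuousB; [exact: f_cont | exact: cvg_cst].
  exact: continuous_comp subc (is_norm_continuous hN _).
have [c Dc Bc] := hD _ (f_cube x); exists (f @^-1` B c) => //; exact: map_f.
Qed.

Lemma perturb_off_nowhere_dense {J : finType} (P : pred J) (V : J -> set X)
    (lam : J -> X -> R) :
  (forall i j x, P i -> P j -> V i x -> V j x -> i = j) ->
  (forall j, P j -> exists c, V j `<=` f @^-1` [set v | N (v - c) < eps / 2]) ->
  (forall j, continuous (lam j)) -> (forall j x, 0 <= lam j x <= 1) ->
  (forall j x, lam j x != 0 -> V j x) ->
  exists g : X -> 'rV[R]_k,
    [/\ continuous g, forall x, cube k a b (g x), forall x, N (f x - g x) <= eps
      & forall j x, P j -> lam j x = 1 -> ~ A (g x)].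
Proof.
move=> V_disj V_ball lam_cont lam01 lam_supp.
have /choice [q hq] : forall j, exists q, P j -> forall x, V j x ->
    [/\ cube k a b q, ~ A q & N (f x - q) <= eps].
  move=> j; have [[Pj [x0 Vx0]]|hno] := pselect (P j /\ exists x, V j x); last first.
    by exists 0 => Pj x Vx; case: hno; split; last exists x.
  have [c Vc] := V_ball j Pj.
  have [|q [Bq Qq Aq]] := closed_nowhere_dense_avoid hA (open_norm_ball hN c (eps / 2)).
    by exists (f x0); split; [exact: Vc | exact: f_cube].
  exists q => _ x Vx; split => //; have fc : N (f x - c) < eps / 2 := Vc x Vx.
  have -> : f x - q = (f x - c) + (c - q) by rewrite addrA subrK.
  apply/ltW/(le_lt_trans (is_normD hN _ _)).
  by rewrite (is_norm_distC hN c) [eps]splitr ltrD.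
(* By disjointness at most one summand of g x is nonzero. *)
pose g x := f x + \sum_(j | P j) lam j x *: (q j - f x).
have lam0 j x : ~ V j x -> lam j x = 0.
  by move=> Vj; apply: contra_notP Vj => /eqP; exact: lam_supp.
have g_on j x : P j -> V j x -> g x = f x + lam j x *: (q j - f x).
  move=> Pj Vj; rewrite /g (big_only1 _ Pj) // => i ij Pi.
  by rewrite lam0 ?scale0r // => Vi; move/eqP: ij; apply; exact: V_disj Vi Vj.
have g_cases x : g x = f x \/ exists2 j, P j /\ V j x & g x = f x + lam j x *: (q j - f x).
  have [[j [Pj Vj]]|hno] := pselect (exists j, P j /\ V j x).
    by right; exists j => //; exact: g_on.
  by left; rewrite /g big1 ?addr0 // => j Pj; rewrite lam0 ?scale0r // => Vj; apply: hno; exists j.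
exists g; split.
- move=> x; apply: continuousD; first exact: f_cont.
  apply: continuous_sum => j {}x; apply: continuousZ (lam_cont j x) _.
  by apply: continuousB; [exact: cvg_cst | exact: f_cont].
- move=> x; have [->|[j [Pj Vj] ->]] := g_cases x; first exact: f_cube.
  by have [qc _ _] := hq j Pj x Vj; apply: cube_convex.
- move=> x; have [->|[j [Pj Vj] ->]] := g_cases x; first by rewrite subrr (is_norm0 hN) ltW.
  have [l0 l1] := andP (lam01 j x).
  rewrite opprD addrA subrr add0r (is_normN hN) (is_normZ hN) ger0_norm // -is_norm_distC //.
  have [_ _ near_q] := hq j Pj x Vj; apply: le_trans near_q.
  by rewrite ler_piMl ?is_norm_ge0.
- move=> j x Pj lam1; have Vj : V j x by apply: lam_supp; rewrite lam1 oner_neq0.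
  have [_ Aq _] := hq j Pj x Vj.
  by rewrite (g_on j x) // lam1 scale1r addrC subrK.
Qed.

End perturbation.

Definition finitely_removable {R : realType} {X : topologicalType} (k : nat -> nat)
    (a b : nat -> R) (N : forall n, 'rV[R]_(k n) -> R)
    (A : forall n, set 'rV[R]_(k n)) (f : forall n, X -> 'rV[R]_(k n)) : Prop :=
  forall eps : nat -> R, (forall n, 0 < eps n) ->
    exists (m : nat) (g : forall n, X -> 'rV[R]_(k n)),
      (forall n, (n < m)%N ->
         [/\ continuous (g n),
             forall x, cube (k n) (a n) (b n) (g n x)
           & forall x, N n (f n x - g n x) <= eps n]) /\
      (forall x, exists n, (n < m)%N /\ ~ A n (g n x)).

Lemma finite_C_space_removable {R : realType} {X : topologicalType} (k : nat -> nat)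
    (a b : nat -> R) (N : forall n, 'rV[R]_(k n) -> R)
    (A : forall n, set 'rV[R]_(k n)) (f : forall n, X -> 'rV[R]_(k n)) :
  finite_C_space R X ->
  (forall n, is_norm (N n)) ->
  (forall n, closed_nowhere_dense_in (cube (k n) (a n) (b n)) (A n)) ->
  (forall n, continuous (f n) /\ forall x, cube (k n) (a n) (b n) (f n x)) ->
  finitely_removable k a b N A f.
Proof.
move=> hC hN hA hf eps eps_gt0.
have /choice [omega homega] : forall n, exists w : seq (set X), fo_finite_cover R w /\
    forall U, U \in w -> exists c, U `<=` f n @^-1` [set v | N n (v - c) < eps n / 2].
  by move=> n; apply: ball_preimage_cover (f n) (hN n) (hf n).1 (hf n).2 _ _; exact: divr_gt0.
have [kk [gamma [gamma_fo gamma_cover]]] := hC omega (fun n => (homega n).1).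
(* The pairs (n, j) with j >= size (gamma n) index the empty set. *)
pose M := \max_(n < kk) size (gamma n).
pose V (p : 'I_kk * 'I_M) := nth set0 (gamma p.1) p.2.
have V0 (p : 'I_kk * 'I_M) : (size (gamma p.1) <= p.2)%N -> V p = set0.
  by move=> hp; rewrite /V nth_default.
have V_fo (p : 'I_kk * 'I_M) : functionally_open R (V p).
  have [hp|/V0 ->] := ltnP p.2 (size (gamma p.1)); last exact: functionally_open_set0.
  by have [[hfo _] _] := gamma_fo _ (ltn_ord p.1); apply: hfo; rewrite mem_nth.
have V_cover x : exists p, V p x.
  have [n [hn [U Ugamma Ux]]] := gamma_cover x.
  have hU : (index U (gamma n) < M)%N.
    apply: leq_trans (@leq_bigmax _ (fun n : 'I_kk => size (gamma n)) (Ordinal hn)).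
    by rewrite index_mem.
  by exists (Ordinal hn, Ordinal hU); rewrite /V /= nth_index.
have [lam [lam_cont lam01 lam_supp lam1]] := functionally_open_cover_saturated V V_fo V_cover.
have /dependent_choice [g hg] : forall n, exists g : X -> 'rV[R]_(k n),
    [/\ continuous g, forall x, cube (k n) (a n) (b n) (g x),
        forall x, N n (f n x - g x) <= eps n
      & forall (p : 'I_kk * 'I_M) x, (p.1 == n :> nat) -> lam p x = 1 -> ~ A n (g x)].
  move=> n; apply: (perturb_off_nowhere_dense _ _ _ (hN n) (hf n).1 (hf n).2 (hA n) (eps_gt0 n)
    (fun p : 'I_kk * 'I_M => p.1 == n :> nat) V lam) => //.
  - move=> [n1 j1] [n2 j2] x /eqP/= n1n /eqP/= n2n; rewrite /V /= => V1 V2.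
    have n12 : n1 = n2 by apply: ord_inj; rewrite n1n n2n.
    subst n2; congr pair; apply: val_inj.
    exact: fo_disjoint_family_nth_inj (gamma_fo _ (ltn_ord n1)).1 V1 V2.
  - move=> p /eqP pn; subst n.
    have [hp|/V0 ->] := ltnP p.2 (size (gamma p.1)); last by exists 0.
    have [_ refine] := gamma_fo _ (ltn_ord p.1).
    have [W /(homega _).2 [c Wc] VW] := refine _ (mem_nth set0 hp).
    by exists c => x /VW /Wc.
exists kk, g; split => [n _|x]; first by case: (hg n).
have [p lam_p] := lam1 x; exists p.1; split => //.
by case: (hg p.1) => _ _ _; apply.
Qed.

Section strict_argmax.
Context {R : realType} {m : nat}.

Definition strict_argmax (y : 'rV[R]_m) (i : 'I_m) : Prop :=
  forall j, j != i -> y 0 j < y 0 i.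

Definition max_gap (i : 'I_m) (y : 'rV[R]_m) : R :=
  \big[Num.min/1]_(j | j != i) (y 0 i - y 0 j).

Lemma max_gap_gt0 i y : 0 < max_gap i y <-> strict_argmax y i.
Proof.
split => [/bigmin_gtP[_ hy] j /hy|hy]; first by rewrite subr_gt0.
by apply/bigmin_gtP; split => // j /hy; rewrite subr_gt0.
Qed.

Lemma max_gap_continuous i : continuous (max_gap i).
Proof.
have min_cont : continuous (fun p : R * R => Num.min p.1 p.2).
  by move=> p; apply: (@continuous_min R _ fst snd p); [exact: cvg_fst | exact: cvg_snd].
apply: (continuous_big min_cont) => j _ y.
by apply: continuousB; apply: coord_continuous.
Qed.

Lemma strict_argmax_unique y i j : strict_argmax y i -> strict_argmax y j -> i = j.
Proof.
move=> yi yj; apply: contrapT => /eqP ij.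
have ji : j != i by rewrite eq_sym.
by have := lt_trans (yi j ji) (yj i ij); rewrite ltxx.
Qed.

Definition no_strict_max : set 'rV[R]_m :=
  [set y | cube m 0 1 y /\ ~ exists i, strict_argmax y i].

Lemma no_strict_max_closed : closed no_strict_max.
Proof.
have -> : no_strict_max =
    cube m 0 1 `&` ~` \bigcup_(i in setT) [set y | 0 < max_gap i y].
  apply/seteqP; split => y [Qy hy]; split => //.
    by move=> [i _ /max_gap_gt0 yi]; apply: hy; exists i.
  by move=> [i /max_gap_gt0 yi]; apply: hy; exists i.
apply: closedI (cube_closed _ _ _) _; apply/open_closedC/bigcup_open => i _.
have -> : [set y | 0 < max_gap i y] = max_gap i @^-1` [set t | 0 < t] by [].
by apply: open_comp; [move=> y _; exact: max_gap_continuous | exact: open_gt].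
Qed.

Lemma no_strict_max_nowhere_dense : (0 < m)%N ->
  closed_nowhere_dense_in (cube m 0 1) no_strict_max.
Proof.
move=> m_gt0; split; [by move=> y [] | exact: no_strict_max_closed |].
move=> U oU UA; apply/seteqP; split => // y [Uy Qy].
pose i0 := [arg max_(i > Ordinal m_gt0) y 0 i]%O.
have y_le j : y 0 j <= y 0 i0 by rewrite /i0; case: arg_maxP => // i _; apply.
pose e : 'rV[R]_m := delta_mx 0 i0.
have Qe : cube m 0 1 e by move=> j; rewrite mxE eqxx /=; case: (j == i0); rewrite /= ?lexx ?ler01.
have /nbhs_normP[r /= r0 ballU] : nbhs y U by move: oU; rewrite openE; apply.
have ey0 := normr_ge0 (e - y).
have d0 : 0 < r + `|e - y| + 1 by lra.
pose t := r / (r + `|e - y| + 1).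
have [t0 t1] : 0 < t /\ t < 1 by rewrite divr_gt0 // ltr_pdivrMr // mul1r; lra.
have Uy' : U (y + t *: (e - y)).
  apply: ballU; rewrite /= opprD addrA subrr add0r normrN normrZ gtr0_norm //.
  by rewrite /t mulrAC ltr_pdivrMr // ltr_pM2l //; lra.
have t01 : 0 <= t <= 1 by rewrite !ltW.
have [_ []] := UA _ (conj Uy' (cube_convex Qy Qe t01)).
exists i0 => j ji0; rewrite !mxE !eqxx /= (negbTE ji0) /=.
by have := y_le j; nra.
Qed.

Lemma strict_argmax_near_gt0 {u v : 'rV[R]_m} {i j : 'I_m} :
  `|u - v| <= 4^-1 -> u 0 j = 1 -> strict_argmax v i -> 0 < u 0 i.
Proof.
move=> uv uj vi.
have uv_l l : `|u 0 l - v 0 l| <= 4^-1.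
  by apply: le_trans uv; have := mx_coord_le_norm (u - v) 0 l; rewrite !mxE.
have vji : v 0 j <= v 0 i by case: (eqVneq j i) => [->|/vi/ltW].
have := uv_l i; have := uv_l j; rewrite uj !ler_norml; lra.
Qed.

End strict_argmax.

Lemma strict_argmax_fo_disjoint_family {R : realType} {X : topologicalType} {m : nat}
    (g : X -> 'rV[R]_m) : continuous g ->
  fo_disjoint_family R [seq [set x | strict_argmax (g x) i] | i <- enum 'I_m].
Proof.
move=> g_cont; split => [W /mapP[i _ ->]|i j].
  have -> : [set x | strict_argmax (g x) i] = [set x | 0 < max_gap i (g x)].
    by apply/seteqP; split => x /max_gap_gt0.
  apply: functionally_open_gt0 => x.
  exact: continuous_comp (g_cont x) (max_gap_continuous i _).
rewrite size_map size_enum_ord => hi hj ij.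
rewrite (nth_map (Ordinal hi)) ?size_enum_ord // (nth_map (Ordinal hj)) ?size_enum_ord //.
apply/seteqP; split => x // [/strict_argmax_unique gij /gij/(congr1 val)].
by rewrite /= !nth_enum_ord.
Qed.

Lemma mx_norm_is_norm {R : realType} (k : nat) : is_norm (@Num.norm _ 'rV[R]_k).
Proof.
by split; [exact: normr_ge0 | move=> v; exact: normr0_eq0 | exact: normrZ | exact: ler_normD].
Qed.

Lemma removable_finite_C_space {R : realType} {X : topologicalType} :
  (forall (k : nat -> nat) (a b : nat -> R) (N : forall n, 'rV[R]_(k n) -> R)
          (A : forall n, set 'rV[R]_(k n)) (f : forall n, X -> 'rV[R]_(k n)),
     (forall n, a n < b n) ->
     (forall n, is_norm (N n)) ->
     (forall n, closed_nowhere_dense_in (cube (k n) (a n) (b n)) (A n)) ->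
     (forall n, continuous (f n) /\ forall x, cube (k n) (a n) (b n) (f n x)) ->
     finitely_removable k a b N A f) ->
  finite_C_space R X.
Proof.
move=> hrem omega omega_cover.
(* No point of the one-point cube of dimension 0 has a strict maximal
   coordinate, so the covers must be nonempty: settle the case X = set0. *)
have [[x0 _]|X0] := pselect (exists x : X, True); last first.
  by exists 0%N, (fun=> [::]); split => // x; case: X0; exists x.
pose K n := size (omega n).
have K_gt0 n : (0 < K n)%N by have [U + _] := (omega_cover n).2 x0; rewrite /K; case: (omega n).
have /dependent_choice [lam hlam] : forall n, exists lam : 'I_(K n) -> X -> R,
    [/\ forall i, continuous (lam i), forall i x, 0 <= lam i x <= 1,
        forall i x, lam i x != 0 -> nth set0 (omega n) i x
      & forall x, exists i, lam i x = 1].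
  move=> n; have [fo cover] := omega_cover n.
  apply: functionally_open_cover_saturated => [i|x]; first by apply: fo; rewrite mem_nth.
  by have [U /[dup] + /(nthP set0)[i hi <-]] := cover x; exists (Ordinal hi).
pose f n x : 'rV[R]_(K n) := \row_i lam n i x.
have f_spec n : continuous (f n) /\ forall x, cube (K n) 0 1 (f n x).
  have [lam_cont lam01 _ _] := hlam n.
  by split; [exact: continuous_row | move=> x i; rewrite mxE].
have [|m [g [g_spec g_avoid]]] := hrem K (fun=> 0) (fun=> 1) _ _ f (fun=> ltr01)
  (fun n => mx_norm_is_norm (K n)) (fun n => no_strict_max_nowhere_dense (K_gt0 n)) f_spec
  (fun=> 4^-1) _; first by move=> n; rewrite invr_gt0.
exists m, (fun n => [seq [set x | strict_argmax (g n x) i] | i <- enum 'I_(K n)]).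
split => [n hn|x]; last first.
  have [n [hn gA]] := g_avoid x; have [_ g_cube _] := g_spec n hn.
  have [i gi] : exists i, strict_argmax (g n x) i.
    by apply: contrapT => hno; apply: gA; split.
  exists n; split => //; exists [set x | strict_argmax (g n x) i] => //.
  by apply: map_f; rewrite mem_enum.
have [g_cont _ g_near] := g_spec n hn.
split; first exact: strict_argmax_fo_disjoint_family.
move=> W /mapP[i _ ->]; exists (nth set0 (omega n) i); first by rewrite mem_nth.
move=> x gi; have [_ _ lam_supp lam1] := hlam n; apply: lam_supp.
have [j lam_j] := lam1 x; have fj : f n x 0 j = 1 by rewrite mxE.
by have := strict_argmax_near_gt0 (g_near x) fj gi; rewrite mxE => /lt0r_neq0.
Qed.

Theorem corollary5p2 (R : realType) (X : topologicalType) (hX : tychonoff_space R X) :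
  finite_C_space R X <->
  (forall (k : nat -> nat) (a b : nat -> R) (N : forall n, 'rV[R]_(k n) -> R)
          (A : forall n, set 'rV[R]_(k n)) (f : forall n, X -> 'rV[R]_(k n)),
     (forall n, a n < b n) ->
     (forall n, is_norm (N n)) ->
     (forall n, closed_nowhere_dense_in (cube (k n) (a n) (b n)) (A n)) ->
     (forall n, continuous (f n) /\ forall x, cube (k n) (a n) (b n) (f n x)) ->
     forall eps : nat -> R, (forall n, 0 < eps n) ->
       exists (m : nat) (g : forall n, X -> 'rV[R]_(k n)),
         (forall n, (n < m)%N ->
            [/\ continuous (g n),
                forall x, cube (k n) (a n) (b n) (g n x)
              & forall x, N n (f n x - g n x) <= eps n]) /\
         (forall x, exists n, (n < m)%N /\ ~ A n (g n x))).
Proof.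
split=> [hC k a b N A f _ hN hA hf|hrem]; first exact: finite_C_space_removable.
exact: removable_finite_C_space.
Qed.
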